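(* Let $N=\{1,\dots,n\}$ and let $F:2^N\to\mathbb{R}$ be quasi-submodular. Let $X_1=\{i\in N: F(i\mid N-i)>0\}$ and $Y_1=\{i\in N: F(i\mid\emptyset)\ge 0\}$. Then every global maximizer of $F$ lies in $[X_1,Y_1]$, i.e., for every $X_*\in\arg\max_{X\subseteq N}F(X)$, $X_1\subseteq X_*\subseteq Y_1$.
   Context: For $A\subseteq N$ and $i\in N$, write $A+i=A\cup\{i\}$, $A-i=A\setminus\{i\}$, and $F(i\mid A)=F(A+i)-F(A)$. $F$ is quasi-submodular if for all $X,Y\subseteq N$ both hold: $F(X\cap Y)\ge F(X)\Rightarrow F(Y)\ge F(X\cup Y)$, and $F(X\cap Y)>F(X)\Rightarrow F(Y)>F(X\cup Y)$. $[A,B]=\{U: A\subseteq U\subseteq B\}$. *)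

From mathcomp Require Import all_boot all_order all_algebra.
From mathcomp Require Import reals.
Set Implicit Arguments. Unset Strict Implicit. Unset Printing Implicit Defensive.
Import Order.TTheory GRing.Theory Num.Theory.
Local Open Scope ring_scope.

(* Ground set N = {1,...,n} is represented by 'I_n; set functions F : {set 'I_n} -> R. *)

Definition marg (R : realType) (n : nat) (F : {set 'I_n} -> R) (i : 'I_n) (A : {set 'I_n}) : R :=
  F (i |: A) - F A.

Definition quasi_submodular (R : realType) (n : nat) (F : {set 'I_n} -> R) : Prop :=
  forall X Y : {set 'I_n},
    (F X <= F (X :&: Y) -> F (X :|: Y) <= F Y) /\
    (F X < F (X :&: Y) -> F (X :|: Y) < F Y).

Definition is_global_max (R : realType) (n : nat) (F : {set 'I_n} -> R) (X : {set 'I_n}) : Prop :=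
  forall Y : {set 'I_n}, F Y <= F X.

From mathcomp Require Import all_boot all_order all_algebra.
From mathcomp Require Import reals.
Import Order.TTheory GRing.Theory Num.Theory.
Local Open Scope ring_scope.

(* Quasi-submodularity applied to X = A + i and Y = B makes marginal gains
   weakly diminishing: if adding i to A does not help, neither does adding it
   to B.  At a global maximizer X, adding an outside element or removing an
   inside one cannot help, which is incompatible with a positive gain at N - i
   resp. a negative gain at the empty set. *)

Section QuasiSubmodular.

Context {R : realType} {n : nat} {F : {set 'I_n} -> R}.
Hypothesis hF : quasi_submodular F.

Lemma setU1I_subset (i : 'I_n) (A B : {set 'I_n}) :
  A \subset B -> i \notin B -> (i |: A) :&: B = A.
Proof.
move=> sAB iB; rewrite setIUl (setIidPl sAB).
suff -> : [set i] :&: B = set0 by rewrite set0U.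
by apply/setP => j; rewrite !inE; case: eqP => // ->; rewrite (negbTE iB).
Qed.

Lemma marg_le0_subset (i : 'I_n) {A B : {set 'I_n}} :
  A \subset B -> i \notin B -> marg F i A <= 0 -> marg F i B <= 0.
Proof.
move=> sAB iB; rewrite /marg !subr_le0 => hA.
have [+ _] := hF (i |: A) B.
by rewrite setU1I_subset // -setUA (setUidPr sAB); apply.
Qed.

Lemma marg_lt0_subset (i : 'I_n) {A B : {set 'I_n}} :
  A \subset B -> i \notin B -> marg F i A < 0 -> marg F i B < 0.
Proof.
move=> sAB iB; rewrite /marg !subr_lt0 => hA.
have [_] := hF (i |: A) B.
by rewrite setU1I_subset // -setUA (setUidPr sAB); apply.
Qed.

Lemma global_max_marg_le0 {X : {set 'I_n}} (i : 'I_n) :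
  is_global_max F X -> marg F i X <= 0.
Proof. by move=> hX; rewrite /marg subr_le0. Qed.

Lemma global_max_marg_setD1_ge0 {X : {set 'I_n}} (i : 'I_n) :
  is_global_max F X -> i \in X -> 0 <= marg F i (X :\ i).
Proof. by move=> hX iX; rewrite /marg setD1K // subr_ge0. Qed.

End QuasiSubmodular.

Theorem lemma7 (R : realType) (n : nat) (F : {set 'I_n} -> R)
  (hF : quasi_submodular F) (Xs : {set 'I_n}) (hX : is_global_max F Xs) :
  [set i | 0 < marg F i ([set: 'I_n] :\ i)] \subset Xs /\
  Xs \subset [set i | 0 <= marg F i set0].
Proof.
split; apply/subsetP => i; rewrite inE.
- apply: contraTT => iX; rewrite -leNgt.
  have sXN : Xs \subset [set: 'I_n] :\ i.
    by apply/subsetP => j jX; rewrite !inE andbT; apply: contraNneq iX => <-.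
  have iN : i \notin [set: 'I_n] :\ i by rewrite !inE eqxx.
  exact: (marg_le0_subset hF i sXN iN (global_max_marg_le0 i hX)).
- move=> iX; rewrite leNgt; apply/negP => gain_neg.
  have iXi : i \notin Xs :\ i by rewrite !inE eqxx.
  have := marg_lt0_subset hF i (sub0set (Xs :\ i)) iXi gain_neg.
  by rewrite ltNge global_max_marg_setD1_ge0.
Qed.
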